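(* Let $k\ge 2$ be an integer and define distributions $\mathbf{p},\mathbf{q}$ on $[k]=\{1,\dots,k\}$ as follows. If $k$ is even: $\mathbf{p}_i=0$ for even $i$, $\mathbf{p}_i=\frac{1}{2^{k-1}}\binom{k}{i}$ for odd $i$; $\mathbf{q}_i=\frac{1}{2^{k-1}-1}\binom{k}{i}$ for even $i$, $\mathbf{q}_i=0$ for odd $i$. If $k$ is odd: $\mathbf{p}_i=\frac{1}{2^{k-1}-1}\binom{k}{i}$ for even $i$, $\mathbf{p}_i=0$ for odd $i$; $\mathbf{q}_i=0$ for even $i$, $\mathbf{q}_i=\frac{1}{2^{k-1}}\binom{k}{i}$ for odd $i$. Then: (1) $\mathbf{p}_k=0$ and $\mathbf{q}_k\ge \frac{1}{2^k}$; (2) for any random variables $X_A\sim\mathbf{p}$ and $X_B\sim\mathbf{q}$, $X_A$ and $X_B$ have $k-1$ proportional moments.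
   Context: Two random variables $X_1,X_2$ have $k-1$ proportional moments if $\frac{\mathbf{E}[X_2]}{\mathbf{E}[X_1]}=\frac{\mathbf{E}[X_2^2]}{\mathbf{E}[X_1^2]}=\cdots=\frac{\mathbf{E}[X_2^{k-1}]}{\mathbf{E}[X_1^{k-1}]}$. *)

From mathcomp Require Import all_boot all_order all_algebra.
Set Implicit Arguments. Unset Strict Implicit. Unset Printing Implicit Defensive.
Import Order.TTheory GRing.Theory Num.Theory.
Local Open Scope ring_scope.

Definition distP (R : realFieldType) (k i : nat) : R :=
  if ~~ odd k then
    (if odd i then 'C(k, i)%:R / (2 ^+ k.-1) else 0)
  else
    (if ~~ odd i then 'C(k, i)%:R / (2 ^+ k.-1 - 1) else 0).

Definition distQ (R : realFieldType) (k i : nat) : R :=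
  if ~~ odd k then
    (if ~~ odd i then 'C(k, i)%:R / (2 ^+ k.-1 - 1) else 0)
  else
    (if odd i then 'C(k, i)%:R / (2 ^+ k.-1) else 0).

Definition moment (R : realFieldType) (d : nat -> R) (k j : nat) : R :=
  \sum_(1 <= i < k.+1) d i * (i%:R) ^+ j.

Definition proportional_moments (R : realFieldType) (k : nat) (m1 m2 : nat -> R) : Prop :=
  forall j l : nat, (1 <= j <= k.-1)%N -> (1 <= l <= k.-1)%N ->
    m2 j / m1 j = m2 l / m1 l.

From mathcomp Require Import all_boot all_order all_algebra ring.
Import Order.TTheory GRing.Theory Num.Theory.
Local Open Scope ring_scope.

(* The k-th finite difference of a polynomial of degree j < k vanishes:
   \sum_i (-1)^i 'C(k, i) i^j = 0.  Hence for 1 <= j <= k - 1 the binomially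
   weighted j-th power sums over the odd and over the even i in [1, k]
   coincide, so the j-th moments of p and q are one and the same sum divided
   by the respective normalizing constants 2^(k-1) and 2^(k-1) - 1, and their
   ratio does not depend on j. *)

Lemma alternating_binomial_sumS {R : pzRingType} (k : nat) (f : nat -> R) :
  \sum_(i < k.+2) (-1) ^+ i * 'C(k.+1, i)%:R * f i =
  \sum_(i < k.+1) (-1) ^+ i * 'C(k, i)%:R * (f i - f i.+1).
Proof.
rewrite big_ord_recl bin0 expr0 !mul1r.
under eq_bigr => i _ do rewrite /= /bump /= add1n binS natrD mulrDr mulrDl.
rewrite big_split /= addrA.
have -> : f 0%N + \sum_(i < k.+1) (-1) ^+ i.+1 * 'C(k, i.+1)%:R * f i.+1
          = \sum_(i < k.+1) (-1) ^+ i * 'C(k, i)%:R * f i.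
  rewrite [RHS]big_ord_recl bin0 expr0 !mul1r; congr (_ + _).
  by rewrite big_ord_recr /= bin_small // mulr0 mul0r addr0.
rewrite -big_split /=; apply: eq_bigr => i _.
by rewrite exprS mulN1r !mulNr mulrBr.
Qed.

Lemma alternating_binomial_sum_pow (R : pzRingType) {k j : nat} : (j < k)%N ->
  \sum_(i < k.+1) (-1) ^+ i * 'C(k, i)%:R * (i%:R : R) ^+ j = 0.
Proof.
elim: k j => // k IHk j ltjk.
have finite_difference i : (i%:R : R) ^+ j - (i.+1%:R : R) ^+ j =
    - \sum_(m < j) (i%:R : R) ^+ m *+ 'C(j, m).
  by rewrite -natr1 exprD1n big_ord_recr /= binn opprD addrCA subrr addr0.
rewrite (alternating_binomial_sumS k (fun i => (i%:R : R) ^+ j)).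
under eq_bigr => i _ do rewrite finite_difference mulrN mulr_sumr.
rewrite sumrN exchange_big /= big1 ?oppr0 // => m _.
under eq_bigr => i _ do rewrite mulrnAr.
by rewrite sumrMnl IHk ?mul0rn // (leq_trans (ltn_ord m)).
Qed.

Definition parity_binomial_moment (R : pzSemiRingType) (b : bool) (k j : nat) : R :=
  \sum_(1 <= i < k.+1 | odd i == b) 'C(k, i)%:R * (i%:R : R) ^+ j.

Lemma parity_binomial_moment_oddE (R : pzRingType) {k j : nat} : (0 < j < k)%N ->
  parity_binomial_moment R true k j = parity_binomial_moment R false k j.
Proof.
case/andP=> j_gt0 ltjk; apply/eqP; rewrite -subr_eq0 -oppr_eq0 opprB; apply/eqP.
have := alternating_binomial_sum_pow R ltjk.
rewrite -(big_mkord xpredT (fun i => (-1) ^+ i * 'C(k, i)%:R * (i%:R : R) ^+ j)).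
rewrite big_ltn // expr0n gtn_eqF // mulr0 add0r (bigID odd) /= addrC => <-.
congr (_ + _).
  apply: eq_big => [i | i /eqP even_i]; first by rewrite eqbF_neg.
  by rewrite -signr_odd even_i mul1r.
rewrite -sumrN; apply: eq_big => [i | i /eqP odd_i]; first by rewrite eqb_id.
by rewrite -signr_odd odd_i mulN1r !mulNr.
Qed.

Lemma parity_binomial_momentE (R : pzRingType) (b : bool) {k j : nat} :
  (0 < j < k)%N -> parity_binomial_moment R b k j = parity_binomial_moment R true k j.
Proof. by case: b => // /parity_binomial_moment_oddE ->. Qed.

Lemma parity_binomial_moment_true_gt0 (R : numDomainType) {k : nat} (j : nat) :
  (0 < k)%N ->
  0 < parity_binomial_moment R true k j.
Proof.
move=> k_gt0.
rewrite /parity_binomial_moment big_ltn_cond ?ltnS //= bin1 expr1n mulr1.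
rewrite ltr_wpDr ?ltr0n // sumr_ge0 // => i _.
by rewrite mulr_ge0 ?exprn_ge0 ?ler0n.
Qed.

(* [2 ^+ k.-1] is the sum of the binomials 'C(k, i) over odd i, and
   [2 ^+ k.-1 - 1] the sum over even i >= 2. *)
Definition parity_binomial_mass (R : pzRingType) (b : bool) (k : nat) : R :=
  if b then 2 ^+ k.-1 else 2 ^+ k.-1 - 1.

Lemma parity_binomial_mass_gt0 (R : numDomainType) (b : bool) {k : nat} :
  (2 <= k)%N ->
  0 < parity_binomial_mass R b k.
Proof.
move=> k_ge2; have pow_gt1 : (1 : R) < 2 ^+ k.-1.
  by rewrite exprn_egt1 ?ltr1n // -lt0n -subn1 subn_gt0.
by case: b; rewrite /parity_binomial_mass ?subr_gt0 // (lt_trans ltr01).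
Qed.

Lemma parity_binomial_mass_le (R : numDomainType) (b : bool) (k : nat) :
  parity_binomial_mass R b k <= 2 ^+ k.
Proof.
have le_pow : (2 : R) ^+ k.-1 <= 2 ^+ k by rewrite ler_weXn2l ?ler1n ?leq_pred.
by case: b; rewrite /parity_binomial_mass // lerBlDr (le_trans le_pow) ?lerDl.
Qed.

Lemma distP_parity (R : realFieldType) (k i : nat) : distP R k i =
  if odd i == ~~ odd k then 'C(k, i)%:R / parity_binomial_mass R (~~ odd k) k else 0.
Proof. by rewrite /distP /parity_binomial_mass; case: (odd k); case: (odd i). Qed.

Lemma distQ_parity (R : realFieldType) (k i : nat) : distQ R k i =
  if odd i == odd k then 'C(k, i)%:R / parity_binomial_mass R (odd k) k else 0.
Proof. by rewrite /distQ /parity_binomial_mass; case: (odd k); case: (odd i). Qed.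

Lemma moment_parity_supported {R : realFieldType} {b : bool} {c : R} {d : nat -> R}
    {k : nat} (j : nat) :
  (forall i, d i = if odd i == b then 'C(k, i)%:R / c else 0) ->
  moment d k j = parity_binomial_moment R b k j / c.
Proof.
move=> dE; rewrite /moment /parity_binomial_moment big_distrl [RHS]big_mkcond /=.
by apply: eq_bigr => i _; rewrite dE; case: ifP; rewrite ?mul0r // mulrAC.
Qed.

Theorem lemma3 (R : realFieldType) (k : nat) (hk : (2 <= k)%N) :
  (distP R k k = 0 /\ 1 / 2 ^+ k <= distQ R k k) /\
  proportional_moments k (moment (distP R k) k) (moment (distQ R k) k).
Proof.
have mass_gt0 b := parity_binomial_mass_gt0 R b hk.
split.
  rewrite distP_parity distQ_parity eqxx binn !div1r; split; first by case: (odd k).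
  by rewrite lef_pV2 ?posrE ?parity_binomial_mass_le ?exprn_gt0.
have moment_ratio j : (1 <= j <= k.-1)%N ->
    moment (distQ R k) k j / moment (distP R k) k j =
    parity_binomial_mass R (~~ odd k) k / parity_binomial_mass R (odd k) k.
  move=> /andP[j_gt0 lejk]; have j_range : (0 < j < k)%N.
    by rewrite j_gt0 (leq_ltn_trans lejk) // ltn_predL (ltnW hk).
  rewrite (moment_parity_supported j (distP_parity R k)).
  rewrite (moment_parity_supported j (distQ_parity R k)).
  have := parity_binomial_moment_true_gt0 R j (ltnW hk).
  rewrite !parity_binomial_momentE // => /gt_eqF S_neq0.
  by field; rewrite S_neq0 !gt_eqF.
by move=> j l hj hl; rewrite !moment_ratio.
Qed.
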